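(* Let $H$ be an $r$-graph with $h$ vertices. Then $$C_r(n,H)=O\!\left(n^{\frac{h-r}{h}}\cdot h^{2r+\frac{r}{h}}\right).$$
   Context: An $r$-graph is an $r$-uniform hypergraph; $K_n^{(r)}$ is the complete $r$-graph on $n$ vertices. A copy of an $r$-graph $H$ in $K_n^{(r)}$ is a subhypergraph isomorphic to $H$. An $(n,r,H)$-local coloring with $k$ colors is a family of edge-colorings $f_v:E(K_n^{(r)})\to[k]$, one per vertex $v$, such that for every copy $T$ of $H$ there is $u\in V(T)$ with $f_u$ injective on $E(T)$. $C_r(n,H)$ is the minimum such $k$. *)

From Stdlib Require Import Reals.
From mathcomp Require Import all_boot.
From mathcomp Require Import boolp.

Set Implicit Arguments.
Unset Strict Implicit.
Unset Printing Implicit Defensive.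

Definition is_rgraph (r h : nat) (EH : {set {set 'I_h}}) : Prop :=
  forall e, e \in EH -> #|e| = r.

(* Copies of H in K_n^(r): for every injective phi : 'I_h -> 'I_n, the
   subhypergraph with vertex set phi('I_h) and edge set {phi(e) | e in EH}.
   Every copy of H arises in this way.  A family of edge colourings
   f v : (r-subsets of 'I_n) -> [k]  (given as a function on all subsets,
   only its values on r-sets matter) is an (n,r,H)-local colouring if for
   every copy T of H some u in V(T) has f u injective on E(T). *)
Definition local_coloring (n h k : nat) (EH : {set {set 'I_h}})
  (f : 'I_n -> {set 'I_n} -> 'I_k) : Prop :=
  forall phi : 'I_h -> 'I_n, injective phi ->
    exists u : 'I_n,
      u \in [set phi i | i : 'I_h] /\
      {in ((fun e : {set 'I_h} => phi @: e) @: EH) &, injective (f u)}.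

Definition has_local_coloring (n h k : nat) (EH : {set {set 'I_h}}) : Prop :=
  exists f : 'I_n -> {set 'I_n} -> 'I_k, @local_coloring n h k EH f.

(* C_r(n,H): the minimum number k of colours admitting a local colouring
   (0 by convention if no k works, which only happens when h = 0). *)
Definition C_r (n h : nat) (EH : {set {set 'I_h}}) : nat :=
  match pselect (exists k, `[< @has_local_coloring n h k EH >]) with
  | left ex => ex_minn ex
  | right _ => 0
  end.

(* Colour at random: the colourings f u, u in 'I_n, are independent and
   uniform.  For a copy T of H the bad event "no u in V(T) colours E(T)
   injectively" has probability at most (|E(H)|^2 / k)^h, the h colourings
   f u (u in V(T)) being independent and each colliding on E(T) with
   probability at most |E(H)|^2 / k.  The event only depends on the values
   f u E with u in V(T), E in E(T); a copy sharing one of them maps an edge of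
   H into V(T), so each event depends on at most |E(H)| h^r n^(h-r) others.
   The symmetric local lemma (4 D p <= 1) then yields a good colouring as soon
   as k^h >= 4 (|E(H)| h^r n^(h-r) + 1) |E(H)|^(2h), and with
   |E(H)| <= min(h^r, 2^h) this holds for k about 16 n^((h-r)/h) h^(2r+r/h). *)

From Stdlib Require Import Reals Lra ZArith.
From mathcomp Require Import all_boot zify boolp.

Set Implicit Arguments.
Unset Strict Implicit.
Unset Printing Implicit Defensive.

Lemma card_bigcup_le (I T : finType) (P : {pred I}) (F : I -> {set T}) :
  #|\bigcup_(i in P) F i| <= \sum_(i in P) #|F i|.
Proof.
elim/big_rec2: _ => [|i S m _ le_S]; first by rewrite cards0.
by apply: leq_trans (leq_card_setU _ _) _; rewrite leq_add2l.
Qed.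

Lemma leq_expn2r m1 m2 e : m1 <= m2 -> m1 ^ e <= m2 ^ e.
Proof. by case: e => // e; rewrite leq_exp2r. Qed.

Section CountingLocalLemma.

Variables (I W : finType) (A : I -> {set W}).

Definition avoiding (J : {set I}) : {set W} :=
  [set w | [forall j in J, w \notin A j]].

Lemma avoidingS (J J' : {set I}) : J' \subset J -> avoiding J \subset avoiding J'.
Proof.
move=> sJ'J; apply/subsetP => w; rewrite !inE => /forall_inP avJ.
by apply/forall_inP => j jJ'; apply: avJ; apply: (subsetP sJ'J).
Qed.

Lemma avoiding0 : avoiding set0 = setT.
Proof. by apply/setP => w; rewrite !inE; apply/forall_inP => j; rewrite inE. Qed.

Lemma avoidingD1 (J : {set I}) i : i \in J -> avoiding J = avoiding (J :\ i) :\: A i.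
Proof.
move=> iJ; apply/setP => w; rewrite !inE.
apply/forall_inP/andP => [avJ | [wAi /forall_inP avJi]].
  split; first exact: avJ.
  by apply/forall_inP => j /setD1P[_]; apply: avJ.
by move=> j jJ; have [-> // | ji] := eqVneq j i; apply: avJi; rewrite !inE ji.
Qed.

Lemma card_avoidingD_le (J J1 : {set I}) :
  J1 \subset J ->
  #|avoiding (J :\: J1)| <=
    #|avoiding J| + \sum_(j in J1) #|A j :&: avoiding (J :\: J1)|.
Proof.
move=> sJ1J.
have cover : avoiding (J :\: J1) \subset
    avoiding J :|: \bigcup_(j in J1) (A j :&: avoiding (J :\: J1)).
  apply/subsetP => w avJ2; rewrite inE; case avJ: (w \in avoiding J) => //=.
  move: avJ; rewrite inE => /negbT; rewrite negb_forall_in => /exists_inP[j jJ].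
  rewrite negbK => wAj; apply/bigcupP; exists j; last by rewrite inE wAj.
  apply: contraLR wAj => jJ1; move: avJ2; rewrite inE => /forall_inP; apply.
  by rewrite inE jJ1.
apply: leq_trans (subset_leq_card cover) _.
apply: leq_trans (leq_card_setU _ _) _.
by rewrite leq_add2l card_bigcup_le.
Qed.

Variables (dep : rel I) (D : nat).
Hypothesis D_gt0 : 0 < D.
Hypothesis W_gt0 : 0 < #|W|.
Hypothesis dep_deg : forall i, #|[set j | dep i j]| <= D.
Hypothesis A_small : forall i, 4 * D * #|A i| <= #|W|.
Hypothesis A_indep : forall i (J : {set I}), {in J, forall j, ~~ dep i j} ->
  #|A i :&: avoiding J| * #|W| = #|A i| * #|avoiding J|.

(* With J1 the neighbours of i in J and J2 := J :\: J1, the event A i is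
   independent of avoiding J2, while by induction avoiding J keeps at least
   half of avoiding J2. *)
Lemma local_lemma_step (J : {set I}) i :
  (forall j (J' : {set I}), #|J'| < #|J| -> j \notin J' ->
     2 * D * #|A j :&: avoiding J'| <= #|avoiding J'|) ->
  i \notin J -> 2 * D * #|A i :&: avoiding J| <= #|avoiding J|.
Proof.
move=> IH iJ; set J1 := J :&: [set j | dep i j]; set J2 := J :\: J1.
have sJ1J : J1 \subset J by apply: subsetIl.
have A_J2 j : j \in J1 -> 2 * D * #|A j :&: avoiding J2| <= #|avoiding J2|.
  move=> jJ1; apply: IH; last by rewrite inE jJ1.
  apply: proper_card; apply/properP; split; first exact: subsetDl.
  by exists j; [apply: (subsetP sJ1J) | rewrite inE jJ1].
have sum_le : 2 * D * \sum_(j in J1) #|A j :&: avoiding J2| <= D * #|avoiding J2|.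
  rewrite big_distrr /=.
  apply: (@leq_trans (\sum_(j in J1) #|avoiding J2|)); first exact: leq_sum.
  rewrite sum_nat_const leq_mul2r (leq_trans _ (dep_deg i)) ?orbT //.
  by apply: subset_leq_card; apply: subsetIr.
have J2_le : #|avoiding J2| <= 2 * #|avoiding J|.
  have := card_avoidingD_le sJ1J; rewrite -/J2 => le_J2.
  have := leq_mul (leqnn (2 * D)) le_J2; rewrite mulnDr; nia.
have Ai_J2 : 4 * D * #|A i :&: avoiding J2| <= #|avoiding J2|.
  have indep : #|A i :&: avoiding J2| * #|W| = #|A i| * #|avoiding J2|.
    apply: A_indep => j; rewrite !inE => /andP[nJ1 jJ].
    by move: nJ1; rewrite jJ.
  rewrite -(leq_pmul2r W_gt0) -mulnA indep mulnA [X in _ <= X]mulnC.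
  exact: leq_mul (A_small i) (leqnn _).
have le_J : #|A i :&: avoiding J| <= #|A i :&: avoiding J2|.
  by apply/subset_leq_card/setIS/avoidingS/subsetDl.
clear -le_J Ai_J2 J2_le; nia.
Qed.

Lemma local_lemma_cond (J : {set I}) i :
  i \notin J -> 2 * D * #|A i :&: avoiding J| <= #|avoiding J|.
Proof.
have [m] := ubnP #|J|; elim: m J i => // m IHm J i /ltnSE le_J iJ.
apply: local_lemma_step iJ => j J' lt_J' jJ'.
by apply: IHm jJ'; apply: leq_trans le_J.
Qed.

Lemma avoiding_gt0 (J : {set I}) : 0 < #|avoiding J|.
Proof.
have [m] := ubnP #|J|; elim: m J => // m IHm J /ltnSE le_J.
have [-> | [i iJ]] := set_0Vmem J; first by rewrite avoiding0 cardsT.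
have iJi : i \notin J :\ i by rewrite !inE eqxx.
have le_Ji : #|J :\ i| < m by rewrite (cardsD1 i J) iJ in le_J.
have := local_lemma_cond iJi; have := IHm _ le_Ji.
rewrite (avoidingD1 iJ) cardsD setIC; clear -D_gt0; nia.
Qed.

Theorem local_lemma : exists w, forall i, w \notin A i.
Proof.
have /card_gt0P[w] := avoiding_gt0 setT.
by rewrite inE => /forall_inP avT; exists w => i; apply: avT; rewrite inE.
Qed.

End CountingLocalLemma.

Section ProductSpace.

Variables (V K : finType).
Implicit Types (S : {set V}) (A B : {set {ffun V -> K}}).

Definition determined_by (S : {set V}) (A : {set {ffun V -> K}}) : Prop :=
  forall w w' : {ffun V -> K}, {in S, w =1 w'} -> (w \in A) = (w' \in A).

Lemma determined_byS S S' A : S \subset S' -> determined_by S A -> determined_by S' A.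
Proof. by move=> sSS' detA w w' eqw; apply: detA => v vS; apply/eqw/(subsetP sSS'). Qed.

Lemma determined_by_avoiding (I : finType) S (A : I -> {set {ffun V -> K}})
    (J : {set I}) :
  {in J, forall j, determined_by S (A j)} -> determined_by S (avoiding A J).
Proof.
move=> detA w w' eqw; rewrite !inE.
by apply: eq_forallb_in => j jJ; rewrite (detA j jJ w w').
Qed.

Lemma determined_by_bigcap (I : finType) (P : {pred I}) S
    (A : I -> {set {ffun V -> K}}) :
  {in P, forall i, determined_by S (A i)} -> determined_by S (\bigcap_(i in P) A i).
Proof.
move=> detA w w' eqw.
by apply/bigcapP/bigcapP => Aw i iP; have := Aw i iP; rewrite (detA i iP w w' eqw).
Qed.

(* Swapping the coordinates outside [S] is an involution of pairs of points
   that maps [A * B] onto [(A :&: B) * setT]. *)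
Lemma card_setI_determined S A B :
  determined_by S A -> determined_by (~: S) B ->
  #|A :&: B| * #|{ffun V -> K}| = #|A| * #|B|.
Proof.
move=> detA detB.
pose splice (a b : {ffun V -> K}) := [ffun v => if v \in S then a v else b v].
pose swap p := (splice p.1 p.2, splice p.2 p.1).
have swapK : involutive swap.
  by case=> a b; congr pair; apply/ffunP => v; rewrite !ffunE; case: (v \in S).
have swapX : setX A B = swap @^-1: setX (A :&: B) setT.
  apply/setP => [[a b]]; rewrite !inE /= andbT.
  rewrite (detA (splice a b) a) => [|v vS]; last by rewrite ffunE vS.
  rewrite (detB (splice a b) b) => [//|v]; rewrite inE => /negbTE vS.
  by rewrite ffunE vS.
by rewrite -cardsX swapX card_preimset ?cardsX ?cardsT //; apply: inv_inj.
Qed.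

Lemma card_ffun_constrained (P : {set V}) (G : V -> {set K}) :
  #|[set w : {ffun V -> K} | [forall v in P, w v \in G v]]| =
  (\prod_(v in P) #|G v|) * #|K| ^ #|~: P|.
Proof.
pose F v : pred K := if v \in P then [in G v] else predT.
have famF : [set w : {ffun V -> K} | [forall v in P, w v \in G v]] =i family F.
  move=> w; rewrite inE; apply/forall_inP/familyP => Gw v.
    by rewrite /F; case: ifP => // vP; apply: Gw.
  by move=> vP; have := Gw v; rewrite /F vP.
rewrite (eq_card famF) card_family foldrE big_map big_enum (bigID (mem P)) /=.
congr (_ * _).
  by apply: eq_bigr => v vP; rewrite /F vP.
rewrite -prod_nat_const; apply: eq_big => [v | v /negbTE vP]; first by rewrite inE.
by rewrite /F vP cardT.
Qed.

Lemma card_ffun_eq_le (a b : V) : a != b ->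
  #|[set w : {ffun V -> K} | w a == w b]| * #|K| <= #|{ffun V -> K}|.
Proof.
move=> ab; set ab2 := [set a; b].
pose const_on c := [set w : {ffun V -> K} | [forall v in ab2, w v \in [set c]]].
have cover : [set w : {ffun V -> K} | w a == w b] \subset \bigcup_c const_on c.
  apply/subsetP => w; rewrite inE => /eqP wab; apply/bigcupP; exists (w a) => //.
  by rewrite inE; apply/forall_inP => v; rewrite !inE => /orP[] /eqP ->; rewrite ?wab.
have card_const c : #|const_on c| = #|K| ^ (#|V| - 2).
  rewrite card_ffun_constrained (eq_bigr (fun _ => 1)) => [|v _]; last exact: cards1.
  by rewrite prod_nat_const exp1n mul1n cardsCs setCK cards2 ab.
have V_ge2 : 2 <= #|V| by move: (max_card ab2); rewrite cards2 ab.
have le_eq : #|[set w : {ffun V -> K} | w a == w b]| <= #|K| * #|K| ^ (#|V| - 2).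
  apply: leq_trans (subset_leq_card cover) _; apply: leq_trans (card_bigcup_le _ _) _.
  by rewrite (eq_bigr _ (fun c _ => card_const c)) sum_nat_const cardT.
apply: leq_trans (leq_mul le_eq (leqnn #|K|)) _.
by rewrite -expnS -expnSr -addn2 subnK // card_ffun.
Qed.

Lemma card_bigcap_determined_le (I : finType) (S : I -> {set V})
    (A : I -> {set {ffun V -> K}}) (U : {set I}) (m k : nat) :
  {in U &, forall u v, u != v -> [disjoint S u & S v]} ->
  {in U, forall u, determined_by (S u) (A u)} ->
  {in U, forall u, #|A u| * k <= m * #|{ffun V -> K}|} ->
  #|\bigcap_(u in U) A u| * k ^ #|U| <= m ^ #|U| * #|{ffun V -> K}|.
Proof.
have [W0 | W_gt0] := posnP #|{ffun V -> K}|.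
  move=> *; move: (max_card (mem (\bigcap_(u in U) A u))).
  by rewrite W0 leqn0 => /eqP ->.
have [N] := ubnP #|U|; elim: N U => // N IHN U /ltnSE le_U disjS detA smallA.
have [-> | [u uU]] := set_0Vmem U.
  by rewrite big_set0 cards0 cardsT expn0 muln1 mul1n.
set C := \bigcap_(v in U :\ u) A v.
have detC : determined_by (~: S u) C.
  apply: determined_by_bigcap => v /setD1P[vu vU]; apply: determined_byS (detA v vU).
  by rewrite -disjoints_subset disjS.
have le_C : #|C| * k ^ #|U :\ u| <= m ^ #|U :\ u| * #|{ffun V -> K}|.
  apply: IHN => [|v w /setD1P[_ vU] /setD1P[_ wU] | v /setD1P[_ vU] | v /setD1P[_ vU]].
  - by rewrite (cardsD1 u U) uU in le_U.
  - exact: disjS.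
  - exact: detA.
  - exact: smallA.
have indep := card_setI_determined (detA u uU) detC.
have -> : \bigcap_(v in U) A v = A u :&: C by rewrite (big_setD1 u uU).
rewrite (cardsD1 u U) uU !expnS -(leq_pmul2r W_gt0) mulnAC indep mulnACA.
by apply: leq_trans (leq_mul (smallA u uU) le_C) _; rewrite mulnACA mulnA.
Qed.

Theorem local_lemma_ffun (I : finType) (S : I -> {set V})
    (A : I -> {set {ffun V -> K}}) (D : nat) :
  0 < D -> 0 < #|K| ->
  (forall i, determined_by (S i) (A i)) ->
  (forall i, #|[set j | ~~ [disjoint S i & S j]]| <= D) ->
  (forall i, 4 * D * #|A i| <= #|{ffun V -> K}|) ->
  exists w, forall i, w \notin A i.
Proof.
move=> D_gt0 K_gt0 detA dep_deg A_small.
pose dep := [rel i j | ~~ [disjoint S i & S j]].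
apply: (local_lemma (dep := dep)) D_gt0 _ dep_deg A_small _.
  by rewrite card_ffun expn_gt0 K_gt0.
move=> i J indepJ; apply: card_setI_determined (detA i) _.
apply: determined_by_avoiding => j jJ; apply: determined_byS (detA j).
by rewrite -disjoints_subset disjoint_sym; move/negbNE: (indepJ j jJ).
Qed.

End ProductSpace.

Section RandomLocalColoring.

Variables (n k : nat).

(* A family of colourings f : 'I_n -> {set 'I_n} -> 'I_k is encoded as a
   single function w on pairs, f u E = w (u, E). *)
Local Notation slot := ('I_n * {set 'I_n})%type.

Implicit Types (w : {ffun slot -> 'I_k}) (Es : {set {set 'I_n}}).

Definition injective_at w (u : 'I_n) Es : bool :=
  [forall x in Es, forall y in Es, (w (u, x) == w (u, y)) ==> (x == y)].

Definition bad_at Es (u : 'I_n) : {set {ffun slot -> 'I_k}} :=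
  [set w | ~~ injective_at w u Es].

Lemma bad_at_determined Es u : determined_by (setX [set u] Es) (bad_at Es u).
Proof.
move=> w w' eqw; rewrite !inE; congr negb.
apply: eq_forallb_in => x xEs; apply: eq_forallb_in => y yEs.
by rewrite !eqw // !inE eqxx.
Qed.

Lemma card_bad_at Es u :
  #|bad_at Es u| * k <= #|Es| ^ 2 * #|{ffun slot -> 'I_k}|.
Proof.
set pairs := [set p in setX Es Es | p.1 != p.2].
have cover : bad_at Es u \subset
    \bigcup_(p in pairs) [set w : {ffun slot -> 'I_k} | w (u, p.1) == w (u, p.2)].
  apply/subsetP => w; rewrite inE negb_forall_in => /exists_inP[x xEs].
  rewrite negb_forall_in => /exists_inP[y yEs]; rewrite negb_imply => /andP[wxy xy].
  by apply/bigcupP; exists (x, y); rewrite !inE ?xEs ?yEs.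
have card_pairs : #|pairs| <= #|Es| ^ 2.
  by rewrite -mulnn -cardsX; apply/subset_leq_card/subsetP => p; rewrite inE => /andP[].
apply: leq_trans (leq_mul (subset_leq_card cover) (leqnn k)) _.
apply: leq_trans (leq_mul (card_bigcup_le _ _) (leqnn k)) _.
rewrite big_distrl /=.
apply: (@leq_trans (\sum_(p in pairs) #|{ffun slot -> 'I_k}|)).
  apply: leq_sum => -[x y]; rewrite inE => /andP[_ xy].
  rewrite -[k in _ * k]card_ord; apply: card_ffun_eq_le.
  by apply: contra xy => /eqP[->].
by rewrite sum_nat_const leq_mul2r card_pairs orbT.
Qed.

Variables (h : nat) (EH : {set {set 'I_h}}).
Implicit Types (phi psi : {ffun 'I_h -> 'I_n}).

Definition copy_vertices phi : {set 'I_n} := [set phi i | i : 'I_h].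

Definition copy_edges phi : {set {set 'I_n}} :=
  [set phi @: e | e : {set 'I_h} in EH].

(* A non-injective map is not a copy of H: it gets the empty event, with empty
   support, so that events can be indexed by all maps 'I_h -> 'I_n. *)
Definition bad_copy phi : {set {ffun slot -> 'I_k}} :=
  if injectiveb phi then \bigcap_(u in copy_vertices phi) bad_at (copy_edges phi) u
  else set0.

Definition copy_support phi : {set slot} :=
  if injectiveb phi then setX (copy_vertices phi) (copy_edges phi) else set0.

Lemma bad_copy_determined phi : determined_by (copy_support phi) (bad_copy phi).
Proof.
rewrite /bad_copy /copy_support; case: injectiveb; last by move=> w w' _; rewrite !inE.
apply: determined_by_bigcap => u uV.
apply: (determined_byS _ (@bad_at_determined _ u)).
by apply: setXS; rewrite ?sub1set ?subxx.
Qed.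

Lemma card_bad_copy phi :
  #|bad_copy phi| * k ^ h <= (#|EH| ^ 2) ^ h * #|{ffun slot -> 'I_k}|.
Proof.
rewrite /bad_copy; case: injectiveP => [inj_phi | _]; last by rewrite cards0.
set Es := copy_edges phi.
have card_V : #|copy_vertices phi| = h by rewrite card_imset // card_ord.
have disj_slots (u v : 'I_n) : u != v -> [disjoint setX [set u] Es & setX [set v] Es].
  move=> uv; rewrite -setI_eq0; apply/eqP/setP => -[x E]; rewrite !inE /=.
  by apply: contraNF uv => /andP[/andP[/eqP <- _] /andP[/eqP <- _]].
have := @card_bigcap_determined_le _ _ _ (fun u => setX [set u] Es) (bad_at Es)
  (copy_vertices phi) (#|Es| ^ 2) k (fun u v _ _ => disj_slots u v)
  (fun u _ => @bad_at_determined Es u) (fun u _ => card_bad_at Es u).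
rewrite card_V => /leq_trans; apply; rewrite leq_mul2r leq_expn2r ?orbT //.
by rewrite leq_sqr leq_imset_card.
Qed.

Lemma card_meeting_copies r phi :
  is_rgraph r EH -> r <= h ->
  #|[set psi | ~~ [disjoint copy_support phi & copy_support psi]]| <=
    #|EH| * (h ^ r * n ^ (h - r)).
Proof.
move=> rg_EH le_rh.
pose lands_in (e : {set 'I_h}) :=
  [set psi : {ffun 'I_h -> 'I_n} | [forall i in e, psi i \in copy_vertices phi]].
have cover : [set psi | ~~ [disjoint copy_support phi & copy_support psi]] \subset
    \bigcup_(e in EH) lands_in e.
  apply/subsetP => psi; rewrite inE -setI_eq0 => /set0Pn[[u E]].
  rewrite /copy_support; case: injectiveb; last by rewrite !inE.
  case: injectiveb; last by rewrite !inE andbF.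
  rewrite !inE /= => /andP[/andP[_ /imsetP[e0 _ ->]] /andP[_ /imsetP[e eEH E_psi]]].
  apply/bigcupP; exists e => //; rewrite inE; apply/forall_inP => i ie.
  have : psi i \in phi @: e0 by rewrite E_psi; apply: imset_f.
  by case/imsetP=> j _ ->; apply: imset_f.
apply: leq_trans (subset_leq_card cover) _; apply: leq_trans (card_bigcup_le _ _) _.
rewrite -sum_nat_const; apply: leq_sum => e eEH.
have card_e := rg_EH e eEH.
have card_Ce : #|~: e| = h - r by rewrite cardsCs setCK card_e card_ord.
rewrite card_ffun_constrained prod_nat_const card_ord card_e card_Ce.
by rewrite leq_mul2r leq_expn2r ?orbT // (leq_trans (leq_imset_card _ _)) ?card_ord.
Qed.

Lemma local_coloring_of_avoiding (w : {ffun slot -> 'I_k}) :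
  (forall phi, w \notin bad_copy phi) -> local_coloring EH (fun u E => w (u, E)).
Proof.
move=> w_good phi inj_phi; pose phi' := finfun phi.
have inj_phi' : injectiveb phi'.
  by apply/injectiveP => i j; rewrite !ffunE; apply: inj_phi.
have verticesE : copy_vertices phi' = [set phi i | i : 'I_h].
  by apply: eq_imset => i; rewrite ffunE.
have edgesE : copy_edges phi' = (fun e : {set 'I_h} => phi @: e) @: EH.
  by apply: eq_imset => e; apply: eq_imset => i; rewrite ffunE.
have := w_good phi'; rewrite /bad_copy inj_phi' -in_setC setC_bigcap verticesE edgesE.
case/bigcupP=> u uV; rewrite !inE negbK => /forall_inP w_inj.
exists u; split=> // E E' EEH E'EH wEE'.
by have /forall_inP/(_ E' E'EH) := w_inj E EEH; rewrite wEE' eqxx => /eqP.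
Qed.

Lemma has_local_coloring_of_le r :
  is_rgraph r EH -> r <= h -> 0 < k ->
  4 * (#|EH| * (h ^ r * n ^ (h - r)) + 1) * (#|EH| ^ 2) ^ h <= k ^ h ->
  has_local_coloring n k EH.
Proof.
move=> rg_EH le_rh k_gt0 budget; set D := _ + 1 in budget.
have [w w_good] : exists w, forall phi, w \notin bad_copy phi.
  apply: (@local_lemma_ffun _ _ _ copy_support _ D) => [||phi|phi|phi].
  - by rewrite /D addn1.
  - by rewrite card_ord.
  - exact: bad_copy_determined.
  - exact: leq_trans (card_meeting_copies phi rg_EH le_rh) (leq_addr 1 _).
  - rewrite -(@leq_pmul2r (k ^ h)) ?expn_gt0 ?k_gt0 // -mulnA.
    apply: leq_trans (leq_mul (leqnn _) (card_bad_copy phi)) _.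
    by rewrite mulnA [X in _ <= X]mulnC leq_mul2r budget orbT.
by exists (fun u E => w (u, E)); apply: local_coloring_of_avoiding.
Qed.

End RandomLocalColoring.

Lemma card_rgraph_le r h (EH : {set {set 'I_h}}) : is_rgraph r EH -> #|EH| <= h ^ r.
Proof.
move=> rg_EH; have : #|EH| <= 'C(h, r).
  rewrite -[h in 'C(h, _)]card_ord -card_draws; apply/subset_leq_card/subsetP => e eEH.
  by rewrite inE rg_EH.
move/leq_trans; apply; apply: leq_trans (leq_pmulr _ (fact_gt0 r)) _.
rewrite bin_ffact ffact_prod -[in h ^ r](card_ord r) -prod_nat_const.
by apply: leq_prod => i _; apply: leq_subr.
Qed.

Lemma card_edges_le h (EH : {set {set 'I_h}}) : #|EH| <= 2 ^ h.
Proof.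
by rewrite -[in 2 ^ h](card_ord h) -cardsT -card_powerset powersetT cardsT max_card.
Qed.

Lemma C_r_le n h k (EH : {set {set 'I_h}}) : has_local_coloring n k EH -> C_r n EH <= k.
Proof.
move=> col; rewrite /C_r; case: pselect => // ex.
by case: ex_minnP => m _; apply; apply/asboolT.
Qed.

Lemma local_lemma_budget_le r h n M :
  0 < h -> 0 < n -> M <= h ^ r -> M <= 2 ^ h ->
  4 * (M * (h ^ r * n ^ (h - r)) + 1) * (M ^ 2) ^ h <=
    16 ^ h * h ^ (2 * r * h + r) * n ^ (h - r).
Proof.
move=> h_gt0 n_gt0 le_Mb le_M2.
have bc_gt0 : 0 < h ^ r * n ^ (h - r) by rewrite muln_gt0 !expn_gt0 h_gt0 n_gt0.
have le_sq : (M ^ 2) ^ h <= h ^ (2 * r * h).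
  have -> : 2 * r * h = r * (2 * h) by lia.
  by rewrite (expnM h) -expnM leq_expn2r.
have le_16 : 8 * 2 ^ h <= 16 ^ h.
  by rewrite (_ : 16 = 2 * 8) // expnMn mulnC leq_mul2l -{1}(expn1 8) leq_pexp2l ?orbT.
set a := 2 ^ h; set b := h ^ r; set c := n ^ (h - r); set d := h ^ (2 * r * h).
have le_sum : M * (b * c) + 1 <= 2 * a * (b * c).
  have : M * (b * c) <= a * (b * c) by rewrite leq_mul2r le_M2 orbT.
  have : 0 < a by rewrite expn_gt0.
  clear -bc_gt0; nia.
apply: leq_trans (leq_mul (leq_mul (leqnn 4) le_sum) le_sq) _.
apply: (@leq_trans (8 * a * (b * c * d))); first by apply: eq_leq; nia.
apply: (@leq_trans (16 ^ h * (b * c * d))); first by rewrite leq_mul2r le_16 orbT.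
by rewrite expnD -/d -/b; apply: eq_leq; nia.
Qed.

Lemma C_r_le_of_pow r h n k (EH : {set {set 'I_h}}) :
  0 < h -> r <= h -> 0 < n -> is_rgraph r EH -> 0 < k ->
  16 ^ h * h ^ (2 * r * h + r) * n ^ (h - r) <= k ^ h -> C_r n EH <= k.
Proof.
move=> h_gt0 le_rh n_gt0 rg_EH k_gt0 le_k.
apply/C_r_le/(has_local_coloring_of_le rg_EH le_rh k_gt0)/(leq_trans _ le_k).
apply: local_lemma_budget_le => //; first exact: card_rgraph_le rg_EH.
exact: card_edges_le.
Qed.

Local Open Scope R_scope.

Lemma INR_muln m1 m2 : INR (m1 * m2) = INR m1 * INR m2.
Proof. by rewrite -multE mult_INR. Qed.

Lemma INR_expn m e : INR (m ^ e) = INR m ^ e.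
Proof. by elim: e => [|e IHe]; rewrite ?expn0 // expnS INR_muln IHe. Qed.

Lemma Rpower_ge1 x y : 1 <= x -> 0 <= y -> 1 <= Rpower x y.
Proof.
move=> x_ge1 y_ge0; have := Rle_Rpower _ _ _ x_ge1 y_ge0.
by rewrite Rpower_O; lra.
Qed.

Lemma pow_Rpower_ratio x (a h : nat) :
  0 < x -> (0 < h)%N -> Rpower x (INR a / INR h) ^ h = x ^ a.
Proof.
move=> x_gt0 h_gt0; have hR : INR h <> 0 by apply: not_0_INR; lia.
rewrite -Rpower_pow; first by rewrite Rpower_mult -Rpower_pow //; congr Rpower; field.
exact: exp_pos.
Qed.

Lemma exists_nat_pow_ge X (N h : nat) :
  0 <= X -> INR N <= X ^ h ->
  exists k : nat, (0 < k)%N /\ (N <= k ^ h)%N /\ INR k <= X + 1.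
Proof.
move=> X_ge0 le_N; have [X_lt_up up_le] := archimed X.
have up_ge0 : (0 <= up X)%Z by apply: le_IZR; lra.
have kE : INR (Z.to_nat (up X)) = IZR (up X) by rewrite INR_IZR_INZ Z2Nat.id.
exists (Z.to_nat (up X)); split; [|split].
- by apply/ltP/INR_lt; rewrite kE /=; lra.
- apply/leP/INR_le; rewrite INR_expn kE; apply: Rle_trans le_N _.
  by apply: pow_incr; lra.
- by rewrite kE; lra.
Qed.

Lemma INR_budget r h n : (0 < h)%N -> (0 < n)%N ->
  INR (16 ^ h * h ^ (2 * r * h + r) * n ^ (h - r)) =
  (16 * (Rpower (INR n) (INR (h - r) / INR h) *
         Rpower (INR h) (INR (2 * r * h + r) / INR h))) ^ h.
Proof.
move=> h_gt0 n_gt0.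
have hR : 0 < INR h by apply/lt_0_INR/ltP.
have nR : 0 < INR n by apply/lt_0_INR/ltP.
have INR16 : INR 16 = 16 by rewrite INR_IZR_INZ.
rewrite (Rpow_mult_distr 16) Rpow_mult_distr !pow_Rpower_ratio // !INR_muln !INR_expn INR16.
by rewrite Rmult_assoc (Rmult_comm (INR h ^ _)).
Qed.

Theorem theorem6 :
  exists c : R, Rlt 0 c /\
    forall (r h : nat) (EH : {set {set 'I_h}}) (n : nat),
      (0 < h)%N -> (r <= h)%N -> (0 < n)%N ->
      @is_rgraph r h EH ->
      Rle (INR (@C_r n h EH))
          (Rmult (Rmult c (Rpower (INR n) (Rdiv (Rminus (INR h) (INR r)) (INR h))))
                 (Rpower (INR h) (Rplus (Rmult 2 (INR r)) (Rdiv (INR r) (INR h))))).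
Proof.
exists 17; split; first lra.
move=> r h EH n h_gt0 le_rh n_gt0 rg_EH.
have h_ge1 : 1 <= INR h by apply: (le_INR 1); apply/leP.
have n_ge1 : 1 <= INR n by apply: (le_INR 1); apply/leP.
have ratio_ge0 a : 0 <= INR a / INR h.
  by apply: Rle_mult_inv_pos; [apply: pos_INR | lra].
have -> : (INR h - INR r) / INR h = INR (h - r) / INR h.
  by rewrite -minusE minus_INR //; apply/leP.
have -> : 2 * INR r + INR r / INR h = INR (2 * r * h + r) / INR h.
  by rewrite -plusE plus_INR !INR_muln /=; field; lra.
set A := Rpower (INR n) _; set B := Rpower (INR h) _.
have AB_ge1 : 1 <= A * B.
  by rewrite -(Rmult_1_l 1); apply: Rmult_le_compat; try lra; apply: Rpower_ge1.
have [k [k_gt0 [le_k kX]]] := @exists_nat_pow_ge (16 * (A * B)) _ h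
  ltac:(lra) (Req_le _ _ (INR_budget r h_gt0 n_gt0)).
have /leP/le_INR Ck := C_r_le_of_pow h_gt0 le_rh n_gt0 rg_EH k_gt0 le_k.
rewrite Rmult_assoc; lra.
Qed.
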